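(* Let $\mathbf{D}$ be a locally small dagger kernel category and $X$ an object. The set $\mathrm{End}(X)=\mathbf{D}(X,X)$, with composition as multiplication, $\mathrm{id}_X$ as unit, $\dagger$ as involution and $[s]=\ker(s)\circ\ker(s)^\dagger$, is a Foulis semigroup; in particular for $s,t\in\mathrm{End}(X)$, $s\circ t=0$ iff $t=[s]\circ r$ for some $r\in\mathrm{End}(X)$. Moreover, sending $f:X\to Y$ to the function $\mathrm{End}(X)\to\mathrm{End}(Y)$, $s\mapsto f\circ s\circ f^\dagger$, makes $X\mapsto\mathrm{End}(X)$ a functor $\mathbf{D}\to\mathbf{Sets}$.
   Context: A dagger category is a category with a contravariant functor $\dagger$ that is the identity on objects and satisfies $f^{\dagger\dagger}=f$; a dagger mono satisfies $k^\dagger\circ k=\mathrm{id}$. A dagger kernel category is a dagger category with a zero object (giving zero morphisms $0$) in which every morphism $s$ has a kernel $\ker(s)$ that is a dagger mono. A Foulis semigroup is a monoid $(S,\cdot,1)$ with maps $(-)^\dagger:S\to S$ and $[-]:S\to S$ such that: (1) $1^\dagger=1$, $(s\cdot t)^\dagger=t^\dagger\cdot s^\dagger$, $s^{\dagger\dagger}=s$; (2) $[s]\cdot[s]=[s]=[s]^\dagger$; (3) $0:=[1]$ satisfies $0\cdot s=0=s\cdot 0$ for all $s$; (4) for all $s,x$: $s\cdot x=0$ iff $x=[s]\cdot y$ for some $y\in S$. *)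

(** A (locally small) dagger kernel category, with chosen zero object and
    chosen dagger-mono kernels. Hom-sets are types (locally small). *)
Record DaggerKernelCat := {
  Ob : Type;
  Hom : Ob -> Ob -> Type;
  comp : forall X Y Z : Ob, Hom Y Z -> Hom X Y -> Hom X Z;
  idm : forall X : Ob, Hom X X;
  comp_assoc : forall (X Y Z W : Ob) (f : Hom X Y) (g : Hom Y Z) (h : Hom Z W),
      comp X Z W h (comp X Y Z g f) = comp X Y W (comp Y Z W h g) f;
  comp_id_l : forall (X Y : Ob) (f : Hom X Y), comp X Y Y (idm Y) f = f;
  comp_id_r : forall (X Y : Ob) (f : Hom X Y), comp X X Y f (idm X) = f;
  dag : forall X Y : Ob, Hom X Y -> Hom Y X;
  dag_id : forall X : Ob, dag X X (idm X) = idm X;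
  dag_comp : forall (X Y Z : Ob) (f : Hom X Y) (g : Hom Y Z),
      dag X Z (comp X Y Z g f) = comp Z Y X (dag X Y f) (dag Y Z g);
  dag_invol : forall (X Y : Ob) (f : Hom X Y), dag Y X (dag X Y f) = f;
  zob : Ob;
  fromZ : forall X : Ob, Hom zob X;
  toZ : forall X : Ob, Hom X zob;
  fromZ_uniq : forall (X : Ob) (f : Hom zob X), f = fromZ X;
  toZ_uniq : forall (X : Ob) (f : Hom X zob), f = toZ X;
  (* every morphism has a (chosen) kernel which is a dagger mono;
     the zero morphism X -> Y is fromZ Y o toZ X *)
  kerOb : forall X Y : Ob, Hom X Y -> Ob;
  ker : forall (X Y : Ob) (s : Hom X Y), Hom (kerOb X Y s) X;
  ker_zero : forall (X Y : Ob) (s : Hom X Y),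
      comp (kerOb X Y s) X Y s (ker X Y s)
      = comp (kerOb X Y s) zob Y (fromZ Y) (toZ (kerOb X Y s));
  ker_univ : forall (X Y W : Ob) (s : Hom X Y) (g : Hom W X),
      comp W X Y s g = comp W zob Y (fromZ Y) (toZ W) ->
      exists! h : Hom W (kerOb X Y s), comp W (kerOb X Y s) X (ker X Y s) h = g;
  ker_dagger_mono : forall (X Y : Ob) (s : Hom X Y),
      comp (kerOb X Y s) X (kerOb X Y s) (dag (kerOb X Y s) X (ker X Y s)) (ker X Y s)
      = idm (kerOb X Y s)
}.

Arguments Hom {d} X Y.
Arguments comp {d X Y Z} g f.
Arguments idm {d} X.
Arguments dag {d X Y} f.
Arguments zob {d}.
Arguments fromZ {d} X.
Arguments toZ {d} X.
Arguments kerOb {d X Y} s.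
Arguments ker {d X Y} s.

Definition zero {D : DaggerKernelCat} (X Y : Ob D) : Hom X Y :=
  comp (fromZ Y) (toZ X).

Definition End {D : DaggerKernelCat} (X : Ob D) : Type := Hom X X.

Definition bracket {D : DaggerKernelCat} {X : Ob D} (s : End X) : End X :=
  comp (ker s) (dag (ker s)).

Definition End_map {D : DaggerKernelCat} {X Y : Ob D} (f : Hom X Y)
  (s : End X) : End Y := comp f (comp s (dag f)).

Definition IsFoulisSemigroup (S : Type) (mul : S -> S -> S) (one : S)
  (dg : S -> S) (br : S -> S) : Prop :=
  (forall a b c, mul a (mul b c) = mul (mul a b) c) /\
  (forall a, mul one a = a) /\ (forall a, mul a one = a) /\
  dg one = one /\ (forall s t, dg (mul s t) = mul (dg t) (dg s)) /\
  (forall s, dg (dg s) = s) /\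
  (forall s, mul (br s) (br s) = br s /\ br s = dg (br s)) /\
  (forall s, mul (br one) s = br one /\ mul s (br one) = br one) /\
  (forall s x, mul s x = br one <-> exists y, x = mul (br s) y).


(** Let [k := ker s] for [s : X -> Y].  The whole argument rests on the
    kernel projection [k o k^dagger] of [X]:
    - since [k] is a dagger mono, [k o k^dagger] is idempotent, and it is
      self-adjoint for any morphism [k];
    - since [k] is a kernel of [s], a morphism [t] into [X] satisfies
      [s o t = 0] exactly when [t] factors through [k], equivalently (using
      [k^dagger o k = id]) when [t = (k o k^dagger) o r] for some [r];
    - the kernel of an identity is zero, so the projection attached to
      [id_X] is the zero endomorphism, which absorbs composition.
    For [X = Y] the kernel projection is [bracket s], and these facts are
    exactly the Foulis axioms (2)-(4); the monoid and involution axioms are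
    the category and dagger laws.  Functoriality of [f |-> f o - o f^dagger]
    follows from contravariance of the dagger. *)

Section DaggerKernelFacts.

Variable D : DaggerKernelCat.

Lemma zero_comp_l (X Y Z : Ob D) (f : Hom X Y) :
  comp (zero Y Z) f = zero X Z.
Proof.
  unfold zero. rewrite <- comp_assoc. f_equal. apply toZ_uniq.
Qed.

Lemma zero_comp_r (X Y Z : Ob D) (g : Hom Y Z) :
  comp g (zero X Y) = zero X Z.
Proof.
  unfold zero. rewrite comp_assoc. f_equal. apply fromZ_uniq.
Qed.

Lemma comp_ker (X Y : Ob D) (s : Hom X Y) : comp s (ker s) = zero _ Y.
Proof. apply ker_zero. Qed.

Lemma ker_idm (X : Ob D) : ker (idm X) = zero _ X.
Proof. rewrite <- (comp_id_l _ _ _ (ker (idm X))). apply comp_ker. Qed.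

Definition kernel_projection {X Y : Ob D} (s : Hom X Y) : Hom X X :=
  comp (ker s) (dag (ker s)).

Lemma dagger_mono_projection_idem (K X : Ob D) (k : Hom K X) :
  comp (dag k) k = idm K ->
  comp (comp k (dag k)) (comp k (dag k)) = comp k (dag k).
Proof.
  intro Hmono.
  rewrite comp_assoc, <- (comp_assoc _ _ _ _ _ k (dag k) k), Hmono.
  now rewrite comp_id_r.
Qed.

Lemma projection_self_adjoint (K X : Ob D) (k : Hom K X) :
  dag (comp k (dag k)) = comp k (dag k).
Proof. now rewrite dag_comp, dag_invol. Qed.

(** Forward, [t = ker s o h] by the kernel property, and then
    [t = (ker s o (ker s)^dagger) o t] since [ker s] is a dagger mono. *)
Lemma annihilator_kernel_projection (W X Y : Ob D) (s : Hom X Y)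
    (t : Hom W X) :
  comp s t = zero W Y <-> exists r : Hom W X, t = comp (kernel_projection s) r.
Proof.
  unfold kernel_projection. split.
  - intro Hst. destruct (ker_univ D X Y W s t Hst) as [h [Hfactor _]].
    exists t. rewrite <- Hfactor, <- comp_assoc.
    rewrite (comp_assoc _ _ _ _ _ h (ker s) (dag (ker s))), ker_dagger_mono.
    now rewrite comp_id_l.
  - intros [r ->]. rewrite !comp_assoc, comp_ker.
    now rewrite !zero_comp_l.
Qed.

Lemma End_map_idm (X : Ob D) (s : End X) : End_map (idm X) s = s.
Proof. unfold End_map. now rewrite dag_id, comp_id_l, comp_id_r. Qed.

Lemma End_map_comp (X Y Z : Ob D) (f : Hom X Y) (g : Hom Y Z) (s : End X) :
  End_map (comp g f) s = End_map g (End_map f s).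
Proof. unfold End_map. now rewrite dag_comp, !comp_assoc. Qed.

End DaggerKernelFacts.

Theorem mainTheorem14 (D : DaggerKernelCat) (X : Ob D) :
  IsFoulisSemigroup (End X) (fun s t => comp s t) (idm X) (fun s => dag s)
    (fun s => bracket s)
  /\ (forall s t : End X,
        comp s t = zero X X <-> exists r : End X, t = comp (bracket s) r)
  /\ (forall s : End X, End_map (idm X) s = s)
  /\ (forall (Y Z : Ob D) (f : Hom X Y) (g : Hom Y Z) (s : End X),
        End_map (comp g f) s = End_map g (End_map f s)).
Proof.
  assert (Hannihilator : forall s t : End X,
             comp s t = zero X X <-> exists r : End X, t = comp (bracket s) r)
    by (intros s t; apply annihilator_kernel_projection).
  assert (Hbracket_one : bracket (idm X) = zero X X)
    by (unfold bracket; rewrite ker_idm; apply zero_comp_l).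
  split; [| split; [exact Hannihilator | split]].
  - repeat split.
    + intros; apply comp_assoc.
    + intros; apply comp_id_l.
    + intros; apply comp_id_r.
    + apply dag_id.
    + intros; apply dag_comp.
    + intros; apply dag_invol.
    + apply dagger_mono_projection_idem, ker_dagger_mono.
    + symmetry; apply projection_self_adjoint.
    + rewrite Hbracket_one; apply zero_comp_l.
    + rewrite Hbracket_one; apply zero_comp_r.
    + rewrite Hbracket_one; apply Hannihilator.
    + rewrite Hbracket_one; apply Hannihilator.
  - apply End_map_idm.
  - apply End_map_comp.
Qed.
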